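(* Let $k\ge1$, $d\ge1$ and $n_1,\dots,n_k\ge2$ be integers and $n:=n_1\cdots n_k$. There exists an injective $\Sigma_k(n_1,\dots,n_k)$-equivariant linear map \[ W_n^{\oplus(d-1)}\longrightarrow W_k(d;n_1,\dots,n_k), \] where $\Sigma_k(n_1,\dots,n_k)$ acts on $W_n^{\oplus(d-1)}$ via the inclusion $\Sigma_k(n_1,\dots,n_k)\subseteq S_n$.
   Context: $W_m=\{x\in\mathbb{R}^m:\sum x_i=0\}$ with $S_m$ acting by $\tau\cdot(x_1,\dots,x_m)=(x_{\tau^{-1}(1)},\dots,x_{\tau^{-1}(m)})$, diagonally on $W_m^{\oplus(d-1)}$. Wreath product action: if $G$ acts on $X$ and $S_m$ on $Y$, $G^{\times m}\rtimes S_m$ ($S_m$ permuting factors) acts on $X^{\times m}\times Y$ by $(g_1,\dots,g_m;\sigma)\cdot(x_1,\dots,x_m;y)=(g_1x_{\sigma^{-1}(1)},\dots,g_mx_{\sigma^{-1}(m)};\sigma y)$. $\Sigma_1(n_1)=S_{n_1}$, $\Sigma_k(n_1,\dots,n_k)=\Sigma_{k-1}(n_1,\dots,n_{k-1})^{\times n_k}\rtimes S_{n_k}$. $W_1(d;n_1)=W_{n_1}^{\oplus(d-1)}$, $W_k(d;n_1,\dots,n_k)=W_{k-1}(d;n_1,\dots,n_{k-1})^{\oplus n_k}\oplus W_{n_k}^{\oplus(d-1)}$ with the inductively defined wreath product action. Inclusion $\Sigma_k(n_1,\dots,n_k)\subseteq S_n$: for $k=1$ the identity; for $k\ge2$, with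 $n'=n_1\cdots n_{k-1}$, identify $[n]$ with $[n']\times[n_k]$ via $(i,j)\leftrightarrow(j-1)n'+i$, and let $(\Sigma_1,\dots,\Sigma_{n_k};\sigma)$ act by $(i,j)\mapsto(\Sigma_{\sigma(j)}(i),\sigma(j))$, with each $\Sigma_l\in\Sigma_{k-1}(n_1,\dots,n_{k-1})\subseteq S_{n'}$ inductively. *)

From HB Require Import structures.
From mathcomp Require Import all_boot all_order all_algebra all_fingroup.
From mathcomp Require Import reals.
Set Implicit Arguments. Unset Strict Implicit. Unset Printing Implicit Defensive.
Import GRing.Theory.
Local Open Scope ring_scope.

Lemma mkidx_proof (N' m : nat) (a : 'I_N') (b : 'I_m) : (b * N' + a < N' * m)%N.
Proof.
have := ltn_ord a; have := ltn_ord b => hb ha.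
apply: (@leq_trans (b * N' + N')); first by rewrite ltn_add2l.
by rewrite -mulSnr mulnC leq_mul2l hb orbT.
Qed.
Definition mkidx (N' m : nat) (a : 'I_N') (b : 'I_m) : 'I_(N' * m) :=
  Ordinal (mkidx_proof a b).

Lemma idx_pos (N' m : nat) (i : 'I_(N' * m)) : (0 < N')%N.
Proof. by case: N' i => [|//] [i]; rewrite mul0n. Qed.
Lemma idx_hi_proof (N' m : nat) (i : 'I_(N' * m)) : (i %/ N' < m)%N.
Proof. rewrite ltn_divLR ?(idx_pos i) //; case: i => i /= hi; by rewrite mulnC. Qed.
Lemma idx_lo_proof (N' m : nat) (i : 'I_(N' * m)) : (i %% N' < N')%N.
Proof. by rewrite ltn_mod (idx_pos i). Qed.
Definition idx_hi (N' m : nat) (i : 'I_(N' * m)) : 'I_m := Ordinal (idx_hi_proof i).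
Definition idx_lo (N' m : nat) (i : 'I_(N' * m)) : 'I_N' := Ordinal (idx_lo_proof i).

Lemma mkidx_hi (N' m : nat) (a : 'I_N') (b : 'I_m) : idx_hi (mkidx a b) = b.
Proof.
apply: val_inj => /=; have hp : (0 < N')%N by case: N' a => [[]|].
by rewrite divnDl ?dvdn_mull // mulnK // divn_small // addn0.
Qed.
Lemma mkidx_lo (N' m : nat) (a : 'I_N') (b : 'I_m) : idx_lo (mkidx a b) = a.
Proof. by apply: val_inj => /=; rewrite modnMDl modn_small. Qed.
Lemma mkidx_inj (N' m : nat) (a a' : 'I_N') (b b' : 'I_m) :
  mkidx a b = mkidx a' b' -> a = a' /\ b = b'.
Proof.
move=> e; split; first by have := congr1 (@idx_lo N' m) e; rewrite !mkidx_lo.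
by have := congr1 (@idx_hi N' m) e; rewrite !mkidx_hi.
Qed.
Lemma idxK (N' m : nat) (i : 'I_(N' * m)) : mkidx (idx_lo i) (idx_hi i) = i.
Proof. by apply: val_inj => /=; rewrite -divn_eq. Qed.

(* SigT n1 [:: n_k; ...; n_2] = Sigma_k(n_1, ..., n_k);  SigT n1 [::] = S_{n_1}.
   An element of Sigma_{k-1}^{x n_k} x| S_{n_k} is a pair (tuple (g_1,...,g_{n_k}), sigma). *)
Fixpoint SigT (n1 : nat) (s : seq nat) : Type :=
  match s with
  | [::] => {perm 'I_n1}
  | m :: s' => (('I_m -> SigT n1 s') * {perm 'I_m})%type
  end.

Fixpoint NT (n1 : nat) (s : seq nat) : nat :=
  match s with
  | [::] => n1
  | m :: s' => (NT n1 s' * m)%N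
  end.

(* The inclusion Sigma_k(n_1,...,n_k) into S_n, as a function on indices:
   [n] = [n'] x [n_k] via (i, j) <-> j * n' + i (0-based), and
   (Sigma_1,...,Sigma_{n_k}; sigma) maps (i, j) to (Sigma_{sigma j} i, sigma j). *)
Fixpoint emb (n1 : nat) (s : seq nat) : SigT n1 s -> 'I_(NT n1 s) -> 'I_(NT n1 s) :=
  match s return SigT n1 s -> 'I_(NT n1 s) -> 'I_(NT n1 s) with
  | [::] => fun g i => g i
  | m :: s' => fun g i =>
      let j' := g.2 (idx_hi i) in
      mkidx (emb (g.1 j') (idx_lo i)) j'
  end.

Lemma emb_inj (n1 : nat) (s : seq nat) (g : SigT n1 s) : injective (emb g).
Proof.
elim: s g => [|m s IH] g i i' /=; first exact: perm_inj.
move/mkidx_inj=> [e1 e2]; move/perm_inj: e2 => e2.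
rewrite e2 in e1; move/IH: e1 => e1.
by rewrite -(idxK i) -(idxK i') e1 e2.
Qed.

Definition incl (n1 : nat) (s : seq nat) (g : SigT n1 s) : {perm 'I_(NT n1 s)} :=
  perm (@emb_inj n1 s g).

Section Reps.
Variable R : realType.
Variable d : nat.

(* An element of R^m (+) ... (+) R^m  ((d-1) copies) is a (d-1) x m matrix
   whose rows are the copies.  S_m acts diagonally by
   tau . (x_1,...,x_m) = (x_{tau^-1 1}, ..., x_{tau^-1 m}) on each row. *)
Definition permact (m : nat) (tau : {perm 'I_m}) (x : 'M[R]_(d.-1, m)) : 'M[R]_(d.-1, m) :=
  \matrix_(r, i) x r ((tau^-1)%g i).

Definition inWd (m : nat) (x : 'M[R]_(d.-1, m)) : Prop :=
  forall r : 'I_(d.-1), \sum_(i < m) x r i = 0.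

(* ambient space of W_k(d; n_1,...,n_k):  for k = 1 it is (R^{n_1})^{d-1};
   for k >= 2 it is (ambient of W_{k-1})^{n_k} x (R^{n_k})^{d-1} *)
Fixpoint Amb (n1 : nat) (s : seq nat) : lmodType R :=
  match s with
  | [::] => 'M[R]_(d.-1, n1)
  | m :: s' => ({ffun 'I_m -> Amb n1 s'} * 'M[R]_(d.-1, m))%type
  end.

Fixpoint inWk (n1 : nat) (s : seq nat) : Amb n1 s -> Prop :=
  match s return Amb n1 s -> Prop with
  | [::] => fun x => inWd x
  | m :: s' => fun x => (forall j : 'I_m, inWk (x.1 j)) /\ inWd x.2
  end.

Fixpoint actk (n1 : nat) (s : seq nat) : SigT n1 s -> Amb n1 s -> Amb n1 s :=
  match s return SigT n1 s -> Amb n1 s -> Amb n1 s with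
  | [::] => fun g x => permact g x
  | m :: s' => fun g x =>
      ([ffun j => actk (g.1 j) (x.1 ((g.2^-1)%g j))], permact g.2 x.2)
  end.

End Reps.

(* Versions taking the parameters in the paper's order n_1, n_2, ..., n_k:
   here n_1 = n1 and ns = [:: n_2; ...; n_k]. *)
Definition Sigma (n1 : nat) (ns : seq nat) : Type := SigT n1 (rev ns).
Definition nprod (n1 : nat) (ns : seq nat) : nat := NT n1 (rev ns).
Definition Sigma_incl (n1 : nat) (ns : seq nat) (g : Sigma n1 ns) : {perm 'I_(nprod n1 ns)} :=
  @incl n1 (rev ns) g.
Definition Wamb (R : realType) (d n1 : nat) (ns : seq nat) : lmodType R := Amb R d n1 (rev ns).
Definition inW (R : realType) (d n1 : nat) (ns : seq nat) : Wamb R d n1 ns -> Prop :=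
  @inWk R d n1 (rev ns).
Definition Sigma_act (R : realType) (d n1 : nat) (ns : seq nat) :
  Sigma n1 ns -> Wamb R d n1 ns -> Wamb R d n1 ns := @actk R d n1 (rev ns).

From HB Require Import structures.
From mathcomp Require Import all_boot all_order all_algebra all_fingroup.
From mathcomp Require Import reals ring.
Import GRing.Theory Num.Theory.
Set Implicit Arguments. Unset Strict Implicit.
Local Open Scope ring_scope.

(* Identify [n] with [n'] x [n_k], so that x in (R^n)^(d-1) is a family of n_k
   blocks in (R^n')^(d-1).  Send x to the vector of its block sums, which lies
   in W_(n_k) as soon as x lies in W_n, together with the n_k centered blocks
   (each block minus its mean), which lie in W_(n'); embed these recursively.
   Block sums and centered blocks determine x, so the map is injective, and an
   element (g_1, ..., g_(n_k); sigma) of Sigma_k permutes the blocks by sigma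
   and the entries of each block by some g_j, which is exactly the wreath
   product action on the image. *)

Lemma sum_mkidx (V : nmodType) (N m : nat) (G : 'I_(N * m) -> V) :
  \sum_(j < m) \sum_(i < N) G (mkidx i j) = \sum_p G p.
Proof.
rewrite pair_big (reindex (fun p : 'I_m * 'I_N => mkidx p.2 p.1)) //=.
exists (fun p => (idx_hi p, idx_lo p)) => [[j i] _ | p _] /=.
  by rewrite mkidx_hi mkidx_lo.
exact: idxK.
Qed.

Lemma inclV_mkidx (n1 m : nat) (s : seq nat) (g : SigT n1 (m :: s)) i j :
  ((incl g)^-1)%g (mkidx i j) = mkidx (((incl (g.1 j))^-1)%g i) ((g.2^-1)%g j).
Proof.
apply: (@perm_inj _ (incl g)).
rewrite permKV [in RHS]permE /= mkidx_hi mkidx_lo permKV.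
by have := permKV (incl (g.1 j)) i; rewrite permE => ->.
Qed.

Section BlockDecomposition.
Variables (R : numFieldType) (r N m : nat).
Implicit Types x y : 'M[R]_(r, N * m).

Definition block_sum x : 'M[R]_(r, m) :=
  \matrix_(k, j) \sum_(i < N) x k (mkidx i j).

Definition centered_block x (j : 'I_m) : 'M[R]_(r, N) :=
  \matrix_(k, i) (x k (mkidx i j) - block_sum x k j / N%:R).

Lemma block_sum_linear (a : R) x y :
  block_sum (a *: x + y) = a *: block_sum x + block_sum y.
Proof.
apply/matrixP => k j; rewrite !mxE.
under eq_bigr do rewrite !mxE.
by rewrite big_split /= -mulr_sumr.
Qed.

Lemma centered_block_linear (a : R) x y j :
  centered_block (a *: x + y) j = a *: centered_block x j + centered_block y j.
Proof.
apply/matrixP => k i; rewrite [LHS]mxE block_sum_linear !mxE; ring.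
Qed.

Lemma sum_centered_block x j k : \sum_i centered_block x j k i = 0.
Proof.
under eq_bigr do rewrite mxE.
rewrite sumrB sumr_const card_ord mxE -[_ *+ N]mulr_natr.
case: N x => [|N'] x; first by rewrite big_ord0 !mul0r subrr.
by rewrite -mulrA mulVf ?mulr1 ?subrr // pnatr_eq0.
Qed.

Lemma sum_block_sum x k : \sum_j block_sum x k j = \sum_p x k p.
Proof. by under eq_bigr do rewrite mxE; rewrite sum_mkidx. Qed.

Lemma block_decomposition_inj x y :
  block_sum x = block_sum y -> (forall j, centered_block x j = centered_block y j) ->
  x = y.
Proof.
move=> eq_sum eq_blocks; apply/matrixP => k p; rewrite -(idxK p).
move/matrixP/(_ k (idx_lo p)): (eq_blocks (idx_hi p)).
by rewrite /centered_block eq_sum !mxE => /addIr.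
Qed.

Section Reindex.
Variables (h : 'I_m -> {perm 'I_N}) (tau : 'I_m -> 'I_m) (x y : 'M[R]_(r, N * m)).
Hypothesis y_reindex : forall k i j, y k (mkidx i j) = x k (mkidx (h j i) (tau j)).

Lemma block_sum_reindex : block_sum y = \matrix_(k, j) block_sum x k (tau j).
Proof.
apply/matrixP => k j; rewrite !mxE.
under eq_bigr do rewrite y_reindex.
by symmetry; apply: reindex_inj; apply: perm_inj.
Qed.

Lemma centered_block_reindex j :
  centered_block y j = \matrix_(k, i) centered_block x (tau j) k (h j i).
Proof.
by apply/matrixP => k i; rewrite [LHS]mxE y_reindex block_sum_reindex !mxE.
Qed.

End Reindex.

End BlockDecomposition.

Section WreathEmbedding.
Variables (R : realType) (d n1 : nat).

Fixpoint wreath_embed (s : seq nat) : 'M[R]_(d.-1, NT n1 s) -> Amb R d n1 s :=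
  match s return 'M[R]_(d.-1, NT n1 s) -> Amb R d n1 s with
  | [::] => id
  | m :: s' => fun x =>
      ([ffun j => wreath_embed (@centered_block _ _ (NT n1 s') m x j)], block_sum x)
  end.

Lemma wreath_embed_linear (s : seq nat) (a : R) x y :
  wreath_embed (a *: x + y) = a *: wreath_embed x + @wreath_embed s y.
Proof.
elim: s x y => [|m s IH] x y //=.
congr pair; last exact: block_sum_linear.
by apply/ffunP => j; rewrite !ffunE centered_block_linear IH.
Qed.

Lemma wreath_embed_inj (s : seq nat) : injective (@wreath_embed s).
Proof.
elim: s => [|m s IH] x y //= [eq_blocks eq_sum].
apply: block_decomposition_inj eq_sum _ => j; apply: IH.
by move/ffunP/(_ j): eq_blocks; rewrite !ffunE.
Qed.

Lemma wreath_embed_in (s : seq nat) x : inWd x -> inWk (@wreath_embed s x).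
Proof.
elim: s x => [|m s IH] x //= x_in; split.
  by move=> j; rewrite ffunE; apply: IH => k; apply: sum_centered_block.
by move=> k; rewrite sum_block_sum.
Qed.

Lemma wreath_embed_equivariant (s : seq nat) (g : SigT n1 s) x :
  wreath_embed (permact (incl g) x) = actk g (wreath_embed x).
Proof.
elim: s g x => [|m s IH] g x /=.
  by congr permact; apply/permP => i; rewrite permE.
have reindex k i j : permact (incl g) x k (mkidx i j) =
    x k (mkidx (((incl (g.1 j))^-1)%g i) ((g.2^-1)%g j)).
  by rewrite mxE inclV_mkidx.
congr pair; last by rewrite (block_sum_reindex reindex); apply/matrixP => k j; rewrite !mxE.
apply/ffunP => j; rewrite !ffunE -IH (centered_block_reindex reindex).
by congr wreath_embed; apply/matrixP => k i; rewrite !mxE.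
Qed.

End WreathEmbedding.

Theorem lemma4p4 (R : realType) (d n1 : nat) (ns : seq nat) :
  (1 <= d)%N -> (2 <= n1)%N -> all (fun m => 2 <= m)%N ns ->
  exists f : 'M[R]_(d.-1, nprod n1 ns) -> Wamb R d n1 ns,
    [/\ (* linear on W_n^{(+)(d-1)} *)
        (forall (a : R) x y, inWd x -> inWd y -> f (a *: x + y) = a *: f x + f y),
        (* maps W_n^{(+)(d-1)} into W_k(d; n_1,...,n_k) *)
        (forall x, inWd x -> inW (f x)),
        (* injective on W_n^{(+)(d-1)} *)
        (forall x y, inWd x -> inWd y -> f x = f y -> x = y) &
        (* Sigma_k-equivariant, Sigma_k acting on W_n^{(+)(d-1)} via Sigma_k <= S_n *)
        (forall (g : Sigma n1 ns) x, inWd x ->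
           f (permact (Sigma_incl g) x) = Sigma_act g (f x))].
Proof.
move=> _ _ _; exists (@wreath_embed R d n1 (rev ns)); split.
- by move=> a x y _ _; apply: wreath_embed_linear.
- by move=> x; apply: wreath_embed_in.
- by move=> x y _ _; apply: wreath_embed_inj.
- by move=> g x _; apply: wreath_embed_equivariant.
Qed.
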